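(* Let $K$ be a compact Hausdorff space and $K'$ its Cantor--Bendixson derivative. If $K'$ has the extension property and $K'$ admits an extension operator in $K$, then $K$ has the extension property.
   Context: $K'$ denotes the set of non-isolated points of $K$. $C(K)$ is the Banach space of real-valued continuous functions on $K$ with the supremum norm. For a closed $F\subseteq K$, an extension operator for $F$ in $K$ is a bounded linear map $E:C(F)\to C(K)$ with $E(f)|_F=f$ for all $f\in C(F)$. A compact space has the extension property if every nonempty closed subset admits an extension operator in it. *)

From HB Require Import structures.
From mathcomp Require Import all_boot all_order all_algebra.
From mathcomp Require Import all_classical all_reals topology normedtype.
Set Implicit Arguments. Unset Strict Implicit. Unset Printing Implicit Defensive.
Import Order.TTheory GRing.Theory Num.Theory.
Import numFieldNormedType.Exports.
Local Open Scope classical_set_scope.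
Local Open Scope ring_scope.

Definition derived_set (K : topologicalType) : set K :=
  ~` isolated [set: K].

(* An element of C(A) (A a subset of T viewed as a subspace) is represented by
   any f : T -> R that is continuous on the subspace A; two representatives
   denote the same element of C(A) iff they agree on A.
   [ext_operator S F E] : E induces a bounded linear operator C(F) -> C(S)
   with E(f)|_F = f  (an extension operator for F in S). *)
Definition ext_operator (R : realType) (T : topologicalType) (S F : set T)
    (E : (T -> R) -> (T -> R)) : Prop :=
  F `<=` S /\
  [/\
    (forall f, {within F, continuous f} -> {within S, continuous (E f)}),
    (forall f g, {within F, continuous f} -> {within F, continuous g} ->
      (forall y, F y -> f y = g y) -> forall x, S x -> E f x = E g x),
    (forall (a : R) f g, {within F, continuous f} -> {within F, continuous g} ->
      forall x, S x -> E (fun y => a * f y + g y) x = a * E f x + E g x),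
    (* bounded for the sup norms: ||E f||_S <= M ||f||_F *)
    (exists M : R, forall f (c : R), {within F, continuous f} -> 0 <= c ->
      (forall y, F y -> `|f y| <= c) -> forall x, S x -> `|E f x| <= M * c)
  &
    (forall f, {within F, continuous f} -> forall x, F x -> E f x = f x)].

Definition ext_property (R : realType) (T : topologicalType) (S : set T) : Prop :=
  forall F : set T, F `<=` S -> F !=set0 ->
    (exists G : set T, closed G /\ F = G `&` S) ->
    exists E : (T -> R) -> (T -> R), ext_operator S F E.

From HB Require Import structures.
From mathcomp Require Import all_boot all_order all_algebra.
From mathcomp Require Import all_classical all_reals topology normedtype.
Import Order.TTheory GRing.Theory Num.Theory.
Import numFieldNormedType.Exports.
Local Open Scope classical_set_scope.
Local Open Scope ring_scope.

(* Let F be closed in K.  Composing an extension operator for F ∩ K' in K'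
   with one for K' in K extends every f ∈ C(F) from F ∩ K' to a continuous
   function on K.  Keep f itself on F and this extension off F: the glued
   function is continuous at the points of F ∩ K', where the two pieces
   agree, at the isolated points of F, where there is nothing to check, and
   off the closed set F. *)

Lemma continuous_within_lin (R : realType) (T : topologicalType) (A : set T)
    (a : R) (f g : T -> R) :
  {within A, continuous f} -> {within A, continuous g} ->
  {within A, continuous (fun y => a * f y + g y)}.
Proof.
move=> cf cg x.
apply: (@continuousD R R^o (subspace A) (fun y => a * f y) g x); last exact: cg.
apply: (@continuousM R (subspace A) (fun=> a) f x); last exact: cf.
exact: cst_continuous.
Qed.

Lemma continuous_within_nbhs (T U : topologicalType) (A : set T) (f : T -> U) x V :
  {within A, continuous f} -> A x -> nbhs (f x) V -> nbhs x (fun y => A y -> V (f y)).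
Proof. by move=> /subspace_continuousP cf Ax; exact: cf. Qed.
Arguments continuous_within_nbhs {T U A f x V}.

Lemma nbhs1_not_derived {T : topologicalType} {x : T} :
  ~ @derived_set T x -> nbhs x [set x].
Proof.
move=> /contrapT[_ [U Ux UTx]].
by apply: filterS Ux => y Uy; rewrite -UTx.
Qed.

Lemma ext_operator_set0 (R : realType) (T : topologicalType) (S : set T) :
  ext_operator S set0 (fun _ _ => 0 : R).
Proof.
split=> //; split=> //.
- by move=> f _; apply: continuous_subspaceT => x; exact: cst_continuous.
- by move=> a f g _ _ x _; rewrite mulr0 addr0.
- by exists 0 => f c _ _ _ x _; rewrite normr0 mul0r.
Qed.

Lemma ext_operator_comp (R : realType) (T : topologicalType) (S1 S2 F : set T)
    (E1 E2 : (T -> R) -> (T -> R)) :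
  ext_operator S1 F E1 -> ext_operator S2 S1 E2 ->
  ext_operator S2 F (E2 \o E1).
Proof.
move=> [FS1 [E1c E1w E1l [M1 E1b] E1e]] [S1S2 [E2c E2w E2l [M2 E2b] E2e]].
split; first exact: subset_trans S1S2.
split=> /=.
- by move=> f cf; exact/E2c/E1c.
- move=> f g cf cg fg x S2x; apply: E2w => //; try exact: E1c.
  by move=> y; apply: E1w.
- move=> a f g cf cg x S2x.
  rewrite -E2l //; try exact: E1c.
  apply: E2w => //; first exact/E1c/continuous_within_lin.
  + by apply: continuous_within_lin; exact: E1c.
  + by move=> y; apply: E1l.
- exists (M2 * Num.max M1 0) => f c cf c0 fc x S2x.
  have M1c0 : 0 <= Num.max M1 0 * c by rewrite mulr_ge0 // le_max lexx orbT.
  rewrite -mulrA; apply: E2b => // [|y S1y]; first exact: E1c.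
  apply: le_trans (E1b f c cf c0 fc y S1y) _.
  by apply: ler_wpM2r => //; rewrite le_max lexx.
- move=> f cf x Fx; rewrite /= E2e; [exact: E1e | exact: E1c | exact: FS1].
Qed.

Lemma continuous_glue_derived (T U : topologicalType) (F : set T) (f g : T -> U) :
  closed F -> {within F, continuous f} -> continuous g ->
  (forall x, F x -> @derived_set T x -> g x = f x) ->
  continuous (fun x => if pselect (F x) then f x else g x).
Proof.
move=> cF cf cg gf x V; rewrite nbhs_simpl; case: pselect => [Fx|nFx] /= Vx.
- have [Dx|nDx] := pselect (@derived_set T x).
    have Vf := continuous_within_nbhs cf Fx Vx.
    have Vg : nbhs x (fun y => V (g y)) by have := cg x V; rewrite gf; exact.
    apply: filterS2 Vf Vg => y Vfy Vgy.
    by rewrite /preimage /=; case: pselect => // Fy; exact: Vfy.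
  apply: filterS (nbhs1_not_derived nDx) => y ->.
  by rewrite /preimage /=; case: pselect => // ?; exact: nbhs_singleton Vx.
- have nFnbhs : nbhs x (~` F).
    by apply: open_nbhs_nbhs; split=> //; exact: closed_openC.
  apply: filterS2 nFnbhs (cg x V Vx) => y nFy Vgy.
  by rewrite /preimage /=; case: pselect.
Qed.

Lemma ext_operator_glue_derived (R : realType) (T : topologicalType) (F : set T)
    (G : (T -> R) -> (T -> R)) :
  closed F -> ext_operator [set: T] (F `&` @derived_set T) G ->
  ext_operator [set: T] F (fun f x => if pselect (F x) then f x else G f x).
Proof.
move=> cF [_ [Gc Gw Gl [M Gb] Ge]].
have cFD (f : T -> R) :
    {within F, continuous f} -> {within F `&` @derived_set T, continuous f}.
  exact: continuous_subspaceW (@subIsetl _ F _).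
split=> //; split.
- move=> f cf; apply: continuous_subspaceT; apply: continuous_glue_derived => //.
    by apply/continuous_subspace_setT; apply/Gc/cFD.
  by move=> x Fx Dx; apply: Ge => //; exact: cFD.
- move=> f g cf cg fg x _; case: pselect => Fx; first exact: fg.
  by apply: Gw => //; [exact: cFD | exact: cFD | move=> y [Fy _]; exact: fg].
- move=> a f g cf cg x _; case: pselect => Fx //.
  by apply: Gl => //; exact: cFD.
- exists (Num.max 1 M) => f c cf c0 fc x _.
  have c1 : c <= Num.max 1 M * c by rewrite ler_peMl // le_max lexx.
  have cM : M * c <= Num.max 1 M * c by rewrite ler_wpM2r // le_max lexx orbT.
  case: pselect => Fx; first exact: le_trans (fc x Fx) c1.
  by apply: le_trans cM; apply: Gb => // [|y [Fy _]]; [exact: cFD | exact: fc].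
- by move=> f cf x Fx; case: pselect.
Qed.

Lemma ext_operator_derived_trace (R : realType) (T : topologicalType) (F : set T) :
  closed F -> ext_property R (@derived_set T) ->
  (exists E : (T -> R) -> (T -> R), ext_operator [set: T] (@derived_set T) E) ->
  exists G : (T -> R) -> (T -> R), ext_operator [set: T] (F `&` @derived_set T) G.
Proof.
move=> cF hD [E ED].
have [->|/set0P FD0] := eqVneq (F `&` @derived_set T) set0.
  by exists (fun _ _ => 0); exact: ext_operator_set0.
have [E' FDD] : exists E' : (T -> R) -> (T -> R),
    ext_operator (@derived_set T) (F `&` @derived_set T) E'.
  by apply: hD; [exact: subIsetr | exact: FD0 | exists F].
by exists (E \o E'); exact: ext_operator_comp FDD ED.
Qed.

Theorem proposition3p8 (R : realType) (K : topologicalType) :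
  compact [set: K] -> hausdorff_space K ->
  ext_property R (@derived_set K) ->
  (exists E : (K -> R) -> (K -> R), ext_operator [set: K] (@derived_set K) E) ->
  ext_property R [set: K].
Proof.
move=> _ _ hD hE F _ _ [G0 [cG0 FG0]].
have cF : closed F by rewrite FG0 setIT.
have [G FDG] := @ext_operator_derived_trace R K F cF hD hE.
by eexists; exact: @ext_operator_glue_derived R K F G cF FDG.
Qed.
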